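(* Let $f(x)=\mathbb{E}[F(x,\omega)]$ be $\tau$-strongly convex with minimizer $x^*$. Suppose: for every $\omega$, $F(\cdot,\omega)$ is convex and $C^1$, and $f$ is $C^1$ with $L$-Lipschitz gradient; with $\bar w_{k,N_k}\triangleq\nabla f(x_k)-\frac1{N_k}\sum_{j=1}^{N_k}\nabla_xF(x_k,\omega_{j,k})$ there are $\nu_1,\nu_2>0$ such that $\mathbb{E}[\|\bar w_{k,N_k}\|^2\mid\mathcal{F}_k]\le\frac{\nu_1^2\|x_k\|^2+\nu_2^2}{N_k}$ and $\mathbb{E}[\bar w_{k,N_k}\mid\mathcal{F}_k]=0$ a.s. for all $k\ge0$; each $H_k$ is $\mathcal{F}_k$-measurable, symmetric positive definite with $\underline\lambda\mathbf{I}\preceq H_k\preceq\overline\lambda\mathbf{I}$ a.s. for constants $0<\underline\lambda\le\overline\lambda$. Let $x_{k+1}=x_k-\gamma_kH_k\frac1{N_k}\sum_{j=1}^{N_k}\nabla_xF(x_k,\omega_{j,k})$ with $\gamma_k=\frac{1}{L\overline\lambda}$ for all $k\ge0$, where $\{N_k\}_{k\ge0}$ is an increasing sequence of positive integers with $\sum_{k=0}^\infty\frac1{N_k}<\infty$ and $N_0>\frac{2\nu_1^2\overline\lambda}{\tau^2\underline\lambda}$. Then $\lim_{k\to\infty}f(x_k)=f(x^* )$ almost surely.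
   Context: $(\Omega,\mathcal{F},\mathbb{P})$ is a probability space and $F(x,\omega)$ abbreviates $F(x,\xi(\omega))$ for a random vector $\xi$; $\omega_{1,k},\dots,\omega_{N_k,k}$ are the samples at iteration $k$, $x_0$ is given, and $\mathcal{F}_k\triangleq\sigma\{x_0,\dots,x_{k-1}\}$. *)

From HB Require Import structures.
From mathcomp Require Import all_boot all_order all_algebra.
From mathcomp Require Import all_classical all_reals all_analysis.
Set Implicit Arguments. Unset Strict Implicit. Unset Printing Implicit Defensive.
Import Order.TTheory GRing.Theory Num.Theory.
Import numFieldNormedType.Exports.
Local Open Scope classical_set_scope.
Local Open Scope ring_scope.

Definition dotv {R : realType} {n : nat} (u v : 'cV[R]_n) : R := (u^T *m v) 0 0.

(* Euclidean norm ||v||_2 (the library norm on matrices is the sup norm). *)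
Definition enorm {R : realType} {n : nat} (v : 'cV[R]_n) : R :=
  Num.sqrt (\sum_(i < n) v i 0 ^+ 2).

Definition is_gradient {R : realType} {n : nat}
  (f : 'cV[R]_n -> R) (g : 'cV[R]_n -> 'cV[R]_n) : Prop :=
  forall x, differentiable f x /\ forall h, 'd f x h = dotv (g x) h.

Definition C1_with_gradient {R : realType} {n : nat}
  (f : 'cV[R]_n -> R) (g : 'cV[R]_n -> 'cV[R]_n) : Prop :=
  is_gradient f g /\ continuous g.

Definition convex_fun {R : realType} {n : nat} (f : 'cV[R]_n -> R) : Prop :=
  forall x y (t : R), 0 <= t <= 1 ->
    f (t *: x + (1 - t) *: y) <= t * f x + (1 - t) * f y.

Definition strongly_convex {R : realType} {n : nat} (tau : R)
  (f : 'cV[R]_n -> R) : Prop :=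
  forall x y (t : R), 0 <= t <= 1 ->
    f (t *: x + (1 - t) *: y)
      <= t * f x + (1 - t) * f y - tau / 2 * t * (1 - t) * enorm (x - y) ^+ 2.

Definition iterate_filtration {d} {T : measurableType d} {R : realType} {n : nat}
  (x : nat -> T -> 'cV[R]_n) (k : nat) : set (set T) :=
  <<s [set A | exists (i : nat) (j : 'I_n) (B : set R),
          (i <= k)%N /\ measurable B /\ A = (fun w => x i w j 0) @^-1` B] >>.

Definition measurable_wrt {d} {T : measurableType d} {R : realType}
  (G : set (set T)) (Y : T -> R) : Prop :=
  forall B : set R, measurable B -> G (Y @^-1` B).

Definition cond_exp_version {d} {T : measurableType d} {R : realType}
  (P : probability T R) (G : set (set T)) (X Y : T -> R) : Prop :=
  [/\ P.-integrable setT (EFin \o X), P.-integrable setT (EFin \o Y),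
      measurable_wrt G Y &
      forall A, G A -> (\int[P]_(w in A) (X w)%:E = \int[P]_(w in A) (Y w)%:E)%E].

From HB Require Import structures.
From mathcomp Require Import all_boot all_order all_algebra.
From mathcomp Require Import all_classical all_reals all_analysis.
From mathcomp Require Import ring lra.
From mathcomp Require Import measurable_realfun.
Import Order.TTheory GRing.Theory Num.Theory.
Import numFieldNormedType.Exports.
Local Open Scope classical_set_scope.
Local Open Scope ring_scope.

(* Let V_k = f(x_k) - f(x* ). The descent lemma for the L-smooth f, the
   Polyak-Lojasiewicz inequality tau V <= |grad f|^2 that follows from strong
   convexity, and the spectral bounds on H_k give on every sample path
     V_(k+1) <= rho V_k + 9/(2L) |wbar_k|^2,  rho = 1 - lam_lo tau / (4 L lam_hi).
   Hence V_k is dominated by the solution U_k of this recursion taken with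
   equality, which (unlike V_k) is measurable. Quadratic growth bounds |x|^2 by
   8 V / tau + 2 |x*|^2, so the variance bound gives
   E U_(k+1) <= rho E U_k + O((E U_k + 1) / N_k), and summability of 1/N_k keeps
   sum_k E U_k finite. By monotone convergence sum_k U_k is then finite almost
   surely, so U_k -> 0 and V_k -> 0 almost surely. *)

Section Dotv.
Context {R : realType} {n : nat}.
Implicit Types (u v w : 'cV[R]_n) (M : 'M[R]_n).

Lemma dotvE u v : dotv u v = \sum_(i < n) u i 0 * v i 0.
Proof. by rewrite /dotv !mxE; apply: eq_bigr => i _; rewrite mxE. Qed.

Lemma dotvC u v : dotv u v = dotv v u.
Proof. by rewrite !dotvE; apply: eq_bigr => i _; rewrite mulrC. Qed.

Lemma dotvDl u v w : dotv (u + v) w = dotv u w + dotv v w.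
Proof. by rewrite !dotvE -big_split; apply: eq_bigr => i _; rewrite !mxE mulrDl. Qed.

Lemma dotvDr u v w : dotv w (u + v) = dotv w u + dotv w v.
Proof. by rewrite dotvC dotvDl !(dotvC w). Qed.

Lemma dotvZl (a : R) u v : dotv (a *: u) v = a * dotv u v.
Proof. by rewrite !dotvE mulr_sumr; apply: eq_bigr => i _; rewrite !mxE mulrA. Qed.

Lemma dotvZr (a : R) u v : dotv u (a *: v) = a * dotv u v.
Proof. by rewrite dotvC dotvZl dotvC. Qed.

Lemma dotvNl u v : dotv (- u) v = - dotv u v.
Proof. by rewrite -scaleN1r dotvZl mulN1r. Qed.

Lemma dotvNr u v : dotv u (- v) = - dotv u v.
Proof. by rewrite dotvC dotvNl dotvC. Qed.

Lemma dotvBl u v w : dotv (u - v) w = dotv u w - dotv v w.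
Proof. by rewrite dotvDl dotvNl. Qed.

Lemma dotvBr u v w : dotv w (u - v) = dotv w u - dotv w v.
Proof. by rewrite dotvDr dotvNr. Qed.

Definition dotv_linE :=
  (dotvDl, dotvDr, dotvBl, dotvBr, dotvNl, dotvNr, dotvZl, dotvZr).

Lemma dotv_ge0 u : 0 <= dotv u u.
Proof. by rewrite dotvE; apply: sumr_ge0 => i _; rewrite -expr2 sqr_ge0. Qed.

Lemma enorm_ge0 u : 0 <= enorm u.
Proof. exact: sqrtr_ge0. Qed.

Lemma enorm_sqr u : enorm u ^+ 2 = dotv u u.
Proof.
rewrite /enorm sqr_sqrtr ?dotvE; last by apply: sumr_ge0 => i _; rewrite sqr_ge0.
by apply: eq_bigr => i _; rewrite expr2.
Qed.

Lemma dotv_trmx M u v : dotv u (M *m v) = dotv (M^T *m u) v.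
Proof. by rewrite /dotv trmx_mul trmxK mulmxA. Qed.

Lemma dotv_young {s : R} u v : 0 < s ->
  2 * dotv u v <= s^-1 * dotv u u + s * dotv v v.
Proof.
move=> s0; have := dotv_ge0 (u - s *: v); rewrite !dotv_linE [dotv v u]dotvC => sq.
rewrite -(ler_pM2l s0) mulrDr (mulrA s s^-1) mulfV ?gt_eqF // mul1r; nra.
Qed.

Lemma dotv_le_shift u v : dotv u u <= 2 * dotv (u - v) (u - v) + 2 * dotv v v.
Proof.
have := dotv_young (u - v) v ltr01; rewrite invr1 !mul1r.
have -> : dotv u u = dotv (u - v + v) (u - v + v) by rewrite subrK.
rewrite !dotv_linE [dotv v u]dotvC; lra.
Qed.

Lemma dotv_sub_young u v :
  dotv (u - v) (u - v) <= 5 / 4 * dotv u u + 5 * dotv v v.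
Proof.
have := dotv_young u (- v) (ltr0n R 4).
rewrite !dotv_linE [dotv v u]dotvC; lra.
Qed.

Lemma psd_form_cross_le {M} (a b : 'cV[R]_n) (t : R) :
  M^T = M -> (forall v, 0 <= dotv v (M *m v)) ->
  2 * t * dotv a (M *m b) <= dotv a (M *m a) + t ^+ 2 * dotv b (M *m b).
Proof.
move=> sM psd; have := psd (a - t *: b).
rewrite mulmxBr -scalemxAr !dotv_linE.
have -> : dotv b (M *m a) = dotv a (M *m b) by rewrite dotv_trmx sM dotvC.
lra.
Qed.

Lemma psd_mulmx_sqr_le {M} {hi : R} v : 0 < hi ->
  M^T = M -> (forall v, 0 <= dotv v (M *m v)) ->
  (forall v, dotv v (M *m v) <= hi * dotv v v) ->
  dotv (M *m v) (M *m v) <= hi * dotv v (M *m v).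
Proof.
move=> hi0 sM psd up.
have cross := psd_form_cross_le (M *m v) v hi sM psd.
have upMv := up (M *m v).
rewrite -(ler_pM2l hi0) mulrA -expr2; lra.
Qed.

End Dotv.

Lemma derive1_le_right_quotient {R : realType} (phi : R -> R) (K : R) :
  derivable phi 0 1 -> (\forall s \near 0^'+, phi s - phi 0 <= s * K) ->
  'D_1 phi 0 <= K.
Proof.
move=> dphi le_phi.
set q := fun s : R => s^-1 *: ((phi \o shift 0) (s *: 1) - phi 0).
have cvq : q @ 0^' --> 'D_1 phi 0 := dphi.
have cvq_right : q @ 0^'+ --> 'D_1 phi 0.
  move=> A /cvq /nbhs_ballP [_ /posnumP[e] xe_A].
  by exists e%:num => //= z xe_z /gt_eqF/negbT/xe_A; exact.
rewrite -(cvg_lim _ cvq_right) //.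
apply: limr_le; first by apply/cvg_ex; exists ('D_1 phi 0).
near=> s.
have s0 : 0 < s by near: s; exact: nbhs_right_gt.
have phi_s : phi s - phi 0 <= s * K by near: s.
rewrite /q /= /shift addr0 [_%:A]mulr1.
by rewrite -(ler_pM2l s0) mulrA mulfV ?gt_eqF // mul1r.
Unshelve. all: by end_near.
Qed.

Section GradientInequalities.
Context {R : realType} {n : nat}.
Context {f : 'cV[R]_n -> R} {g : 'cV[R]_n -> 'cV[R]_n}.
Hypothesis gr : is_gradient f g.

Lemma is_derive_line (x h : 'cV[R]_n) (t : R) :
  is_derive t 1 (fun s : R => f (x + s *: h)) (dotv (g (x + t *: h)) h).
Proof.
have [df dfe] := gr (x + t *: h).
have quotE : (fun s : R => s^-1 *:
      (((fun s => f (x + s *: h)) \o shift t) (s *: 1) - f (x + t *: h))) =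
    (fun s : R => s^-1 *: ((f \o shift (x + t *: h)) (s *: h) - f (x + t *: h))).
  apply/funext => s /=; congr (_ *: (_ - _)); congr f.
  by rewrite [_%:A]mulr1 /shift /= scalerDl addrCA addrA.
apply: DeriveDef; rewrite /derivable /derive quotE.
  exact: diff_derivable.
by have := deriveE h df; rewrite /derive => ->; exact: dfe.
Qed.

Section LipschitzGradient.
Context {L : R}.
Hypotheses (L0 : 0 < L)
  (lip : forall y z, enorm (g y - g z) <= L * enorm (y - z)).

Lemma dotv_lipschitz_le (y h : 'cV[R]_n) (t : R) : 0 < t ->
  dotv (g (y + t *: h) - g y) h <= t * L * dotv h h.
Proof.
move=> t0; set u := g (y + t *: h) - g y.
have Lt0 : 0 < L * t by rewrite mulr_gt0.
have uu : dotv u u <= (L * t) ^+ 2 * dotv h h.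
  have eth : enorm (t *: h) ^+ 2 = t ^+ 2 * dotv h h.
    by rewrite enorm_sqr dotvZl dotvZr mulrA expr2.
  have := lip (y + t *: h) y; rewrite addrAC subrr add0r -/u.
  have := enorm_ge0 u; have := enorm_ge0 (t *: h).
  rewrite -enorm_sqr exprMn -mulrA -eth; nra.
have := dotv_young u h Lt0.
rewrite -(ler_pM2l Lt0) mulrDr mulVKf ?gt_eqF // => young.
rewrite -(ler_pM2l Lt0); lra.
Qed.

Lemma descent_lemma y z :
  f z <= f y + dotv (g y) (z - y) + L / 2 * dotv (z - y) (z - y).
Proof.
set h := z - y.
set c1 := dotv (g y) h; set c2 := L / 2 * dotv h h.
pose phi := fun s : R => f (y + s *: h).
have phi' (t : R) : is_derive t 1 phi (dotv (g (y + t *: h)) h).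
  exact: is_derive_line.
pose psi := phi - (@idfun R) * cst c1 - ((@idfun R) ^+ 2) * cst c2.
have psi' (t : R) :
    is_derive t 1 psi (dotv (g (y + t *: h)) h - c1 - 2 * t * c2).
  apply: is_derive_eq.
  rewrite /= !scaler0 !add0r expr1 [_%:A]mulr1 [(2 * t)%:A]mulr1.
  by rewrite [c2 *: _]mulrC mulrA.
have psi'_le0 (t : R) : 0 < t -> dotv (g (y + t *: h)) h - c1 - 2 * t * c2 <= 0.
  move=> t0; have := dotv_lipschitz_le y h t t0.
  rewrite dotvBl /c1 /c2; lra.
have dpsi t : derivable psi t 1 by apply: ex_derive.
have := @ler0_derive1_le_cc R psi 0 1 (fun t _ => dpsi t).
have psi'_itv t : t \in `]0, 1[%R -> derive1 psi t <= 0.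
  by rewrite in_itv /= => /andP[t0 _]; rewrite derive1E derive_val psi'_le0.
have cpsi : {within `[0, 1], continuous psi}.
  by apply: derivable_within_continuous => t _.
move=> /(_ psi'_itv cpsi 1 0); rewrite !in_itv /= !lexx ler01 => /(_ isT isT isT).
rewrite /psi /phi !fctE scale0r scale1r addr0 /h [y + _]addrC subrK /=.
rewrite expr1n !mul1r expr0n /= !mul0r !subr0; lra.
Qed.

End LipschitzGradient.

Section StronglyConvex.
Context {tau : R}.
Hypotheses (tau0 : 0 < tau) (sc : strongly_convex tau f).

Lemma strongly_convex_gradient_le x y :
  dotv (g x) (y - x) <= f y - f x - tau / 4 * dotv (y - x) (y - x).
Proof.
set h := y - x; have phi' := is_derive_line x h 0.
have <- : 'D_1 (fun s : R => f (x + s *: h)) 0 = dotv (g x) h.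
  by rewrite derive_val scale0r addr0.
apply: derive1_le_right_quotient; first exact: ex_derive.
near=> s.
have s0 : 0 < s by near: s; exact: nbhs_right_gt.
(* restricting to s <= 1/2 turns tau/2 (1 - s) into tau/4 *)
have s_le : s <= 2^-1 by near: s; apply: nbhs_right_le; rewrite invr_gt0.
have := sc y x s; rewrite (ltW s0) (le_trans s_le) ?invf_le1 ?ler1n // => /(_ isT).
have -> : s *: y + (1 - s) *: x = x + s *: h.
  by rewrite /h scalerBr scalerBl scale1r addrCA addrA [_ - s *: x]addrC.
rewrite scale0r addr0 -/h enorm_sqr => hs.
have : 0 <= tau * s * dotv h h * (2^-1 - s).
  by rewrite !mulr_ge0 ?subr_ge0 ?dotv_ge0 // ltW.
lra.
Unshelve. all: by end_near.
Qed.

Lemma strongly_convex_PL xs y : tau * (f y - f xs) <= dotv (g y) (g y).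
Proof.
have := strongly_convex_gradient_le y xs; set h := xs - y; clearbody h => gh.
have := dotv_ge0 (g y + (tau / 2) *: h).
rewrite !dotv_linE [dotv h (g y)]dotvC => sq.
have : tau * (f y - f xs) <= tau * (- dotv (g y) h - tau / 4 * dotv h h).
  by rewrite ler_pM2l //; lra.
have -> : tau * (- dotv (g y) h - tau / 4 * dotv h h) =
   - (tau / 2 * dotv (g y) h + tau / 2 * dotv (g y) h + tau / 2 * (tau / 2 * dotv h h)).
  by field.
lra.
Qed.

End StronglyConvex.

End GradientInequalities.

Lemma strongly_convex_growth {R : realType} {n : nat} (f : 'cV[R]_n -> R)
    (tau : R) (xs : 'cV[R]_n) :
  strongly_convex tau f -> (forall y, f xs <= f y) ->
  forall y, tau / 4 * dotv (y - xs) (y - xs) <= f y - f xs.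
Proof.
move=> sc fmin y.
have := sc y xs 2^-1; rewrite invr_ge0 ler0n invf_le1 ?ler1n // => /(_ isT).
have := fmin (2^-1 *: y + (1 - 2^-1) *: xs).
rewrite enorm_sqr (_ : 1 - 2^-1 = 2^-1 :> R); last by field.
have : tau / 2 * 2^-1 * 2^-1 * dotv (y - xs) (y - xs) =
  tau / 4 * dotv (y - xs) (y - xs) / 2 by field.
lra.
Qed.

Section PreconditionedStep.
Context {R : realType} {n : nat}.
Context {f : 'cV[R]_n -> R} {g : 'cV[R]_n -> 'cV[R]_n} {L hi : R} {M : 'M[R]_n}.
Hypotheses (L0 : 0 < L) (hi0 : 0 < hi) (symM : M^T = M)
  (psdM : forall v, 0 <= dotv v (M *m v))
  (upM : forall v, dotv v (M *m v) <= hi * dotv v v).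
Hypothesis descent :
  forall y z, f z <= f y + dotv (g y) (z - y) + L / 2 * dotv (z - y) (z - y).

Lemma preconditioned_step_le x w :
  f (x - (L * hi)^-1 *: (M *m (g x - w))) <=
    f x - (L * hi)^-1 / 4 * dotv (g x) (M *m g x) + 9 / (2 * L) * dotv w w.
Proof.
(* Young's inequality with weight 4 on <a, M w>, and |M (a - w)|^2 bounded by
   5/4 |M a|^2 + 5 |M w|^2, produce the constants 1/4 and 9/2. *)
set gam := (L * hi)^-1; set a := g x.
have gam0 : 0 < gam by rewrite invr_gt0 mulr_gt0.
set A := dotv a (M *m a); set B := dotv a (M *m w).
set C := dotv w (M *m w); set W := dotv w w.
have cross : 2 * 4 * B <= A + 4 ^+ 2 * C by exact: psd_form_cross_le.
have CW : C <= hi * W by exact: upM.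
have step_sqr : dotv (M *m (a - w)) (M *m (a - w)) <= hi * (5 / 4 * A + 5 * C).
  rewrite mulmxBr; apply: le_trans (dotv_sub_young _ _) _.
  have := psd_mulmx_sqr_le a hi0 symM psdM upM.
  have := psd_mulmx_sqr_le w hi0 symM psdM upM.
  rewrite -/A -/C; lra.
have := descent x (x - gam *: (M *m (a - w))).
rewrite [x - _ - x]addrC addKr dotvNr dotvNl dotvNr opprK dotvZl dotvZr dotvZr.
rewrite mulmxBr dotvBr -/A -/B -mulmxBr.
have -> : L / 2 * (gam * (gam * dotv (M *m (a - w)) (M *m (a - w)))) =
    gam / (2 * hi) * dotv (M *m (a - w)) (M *m (a - w)).
  by rewrite /gam; field; rewrite !gt_eqF.
have -> : 9 / (2 * L) * W = 9 / 2 * gam * (hi * W).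
  by rewrite /gam; field; rewrite !gt_eqF.
have : gam / (2 * hi) * dotv (M *m (a - w)) (M *m (a - w)) <=
    gam * (5 / 8 * A + 5 / 2 * C).
  rewrite -ler_pdivlMl ?divr_gt0 ?mulr_gt0 //; apply: le_trans step_sqr _.
  rewrite [leRHS](_ : _ = hi * (5 / 4 * A + 5 * C)) //.
  by field; rewrite !gt_eqF.
have : gam * C <= gam * (hi * W) by rewrite ler_pM2l.
have : gam * (2 * 4 * B) <= gam * (A + 4 ^+ 2 * C) by rewrite ler_pM2l.
lra.
Qed.

Lemma preconditioned_step_contraction (lo tau fs : R) x w : 0 <= lo ->
  (forall v, lo * dotv v v <= dotv v (M *m v)) ->
  tau * (f x - fs) <= dotv (g x) (g x) ->
  f (x - (L * hi)^-1 *: (M *m (g x - w))) - fs <=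
    (1 - lo * tau / (4 * L * hi)) * (f x - fs) + 9 / (2 * L) * dotv w w.
Proof.
move=> lo0 loM PL; have := preconditioned_step_le x w.
have : (L * hi)^-1 / 4 * (lo * (tau * (f x - fs))) <=
    (L * hi)^-1 / 4 * dotv (g x) (M *m g x).
  rewrite ler_pM2l ?divr_gt0 ?invr_gt0 ?mulr_gt0 //.
  by apply: le_trans (loM _); rewrite ler_wpM2l.
have -> : (L * hi)^-1 / 4 * (lo * (tau * (f x - fs))) =
    lo * tau / (4 * L * hi) * (f x - fs).
  by field; rewrite !gt_eqF.
lra.
Qed.

End PreconditionedStep.

Section StronglyConvexSmooth.
Context {R : realType} {n : nat}.
Context {f : 'cV[R]_n -> R} {g : 'cV[R]_n -> 'cV[R]_n} {xs : 'cV[R]_n}.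
Context {L lo hi tau : R}.
Hypotheses (L0 : 0 < L) (lo0 : 0 < lo) (lohi : lo <= hi) (tau0 : 0 < tau).
Hypotheses (gr : is_gradient f g)
  (lip : forall y z, enorm (g y - g z) <= L * enorm (y - z))
  (sc : strongly_convex tau f) (fmin : forall y, f xs <= f y).

Lemma enorm_sqr_le_gap y : enorm y ^+ 2 <= 8 / tau * (f y - f xs) + 2 * enorm xs ^+ 2.
Proof.
have : dotv (y - xs) (y - xs) <= (tau / 4)^-1 * (f y - f xs).
  by rewrite ler_pdivlMl ?divr_gt0 // strongly_convex_growth.
rewrite invf_div !enorm_sqr; have := dotv_le_shift y xs.
have -> : 8 / tau = 2 * (4 / tau) by field; rewrite gt_eqF.
lra.
Qed.

Lemma affine_enorm_sqr_le_gap (nu1 nu2 : R) {u : R} {y} : f y - f xs <= u ->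
  nu1 ^+ 2 * enorm y ^+ 2 + nu2 ^+ 2 <=
    8 * nu1 ^+ 2 / tau * u + (2 * nu1 ^+ 2 * enorm xs ^+ 2 + nu2 ^+ 2).
Proof.
move=> gap_u; rewrite addrA lerD2r.
have -> : 8 * nu1 ^+ 2 / tau * u + 2 * nu1 ^+ 2 * enorm xs ^+ 2 =
  nu1 ^+ 2 * (8 / tau * u + 2 * enorm xs ^+ 2) by ring.
rewrite ler_wpM2l ?sqr_ge0 //; apply: le_trans (enorm_sqr_le_gap y) _.
by rewrite lerD2r ler_wpM2l ?divr_ge0 // ltW.
Qed.

Lemma preconditioned_step_gap_le (M : 'M[R]_n) (y z : 'cV[R]_n) : M^T = M ->
  (forall v, lo * dotv v v <= dotv v (M *m v) <= hi * dotv v v) ->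
  f (y - (L * hi)^-1 *: (M *m (g y - z))) - f xs <=
    (1 - lo * tau / (4 * L * hi)) * (f y - f xs) + 9 / (2 * L) * enorm z ^+ 2.
Proof.
move=> symM boundsM.
have hi0 : 0 < hi := lt_le_trans lo0 lohi.
have loM v : lo * dotv v v <= dotv v (M *m v) by case/andP: (boundsM v).
have upM v : dotv v (M *m v) <= hi * dotv v v by case/andP: (boundsM v).
have psdM v : 0 <= dotv v (M *m v).
  by apply: le_trans (loM v); rewrite mulr_ge0 ?dotv_ge0 ?ltW.
rewrite enorm_sqr; apply: (preconditioned_step_contraction L0 hi0 symM psdM upM
  (descent_lemma gr L0 lip) lo tau (f xs) y z (ltW lo0) loM).
exact: strongly_convex_PL.
Qed.

End StronglyConvexSmooth.

Section PerturbedContraction.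
Context {R : realType}.
Implicit Types (r q a : nat -> R).

Lemma ge0_sum_nat_le r m p : (forall k, 0 <= r k) -> (m <= p)%N ->
  \sum_(0 <= k < m) r k <= \sum_(0 <= k < p) r k.
Proof.
by move=> r0; apply: (@nondecreasing_series _ r xpredT 0) => k _ _.
Qed.

Lemma sum_weighted_le {r q} {K : nat} {eps : R} :
  (forall k, 0 <= r k) -> (forall k, 0 <= q k) ->
  (forall k, (K <= k)%N -> q k <= eps) ->
  forall m, \sum_(0 <= k < m) q k * r k <=
    \sum_(0 <= k < K) q k * r k + eps * \sum_(0 <= k < m) r k.
Proof.
move=> r0 q0 q_le m.
have eps0 : 0 <= eps by apply: le_trans (q0 K) (q_le K (leqnn K)).
have [mK|Km] := leqP m K.
  rewrite -[leLHS]addr0; apply: lerD; last by rewrite mulr_ge0 ?sumr_ge0.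
  by apply: ge0_sum_nat_le => // k; rewrite mulr_ge0.
rewrite (@big_cat_nat _ _ _ K 0 m) ?(ltnW Km) //= lerD2l.
have tail : \sum_(K <= k < m) q k * r k <= eps * \sum_(K <= k < m) r k.
  by rewrite mulr_sumr; apply: ler_sum_nat => k /andP[Kk _]; rewrite ler_wpM2r ?q_le.
apply: le_trans tail _; rewrite ler_wpM2l // (@big_cat_nat _ _ _ K 0 m) ?(ltnW Km) //=.
by rewrite lerDr sumr_ge0.
Qed.

Lemma perturbed_contraction_sum_bounded r a (rho c b : R) :
  (forall k, 0 <= r k) -> (forall k, 0 <= a k) -> cvgn (series a) ->
  0 <= rho < 1 -> 0 <= c -> 0 <= b ->
  (forall k, r k.+1 <= rho * r k + a k * (c * r k + b)) ->
  exists B, forall m, \sum_(0 <= k < m) r k <= B.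
Proof.
move=> r0 a0 cva /andP[rho0 rho1] c0 b0 rec.
set T := limn (series a).
have sum_a m : \sum_(0 <= k < m) a k <= T.
  by apply: nondecreasing_cvgn_le cva m; exact: nondecreasing_series.
(* from K on, the perturbation c a_k uses up at most half of the margin 1 - rho *)
set eps := (1 - rho) / 2.
have [K _ a_small] : \forall k \near \oo, c * a k <= eps.
  have c1 : 0 < c + 1 by rewrite ltr_wpDl.
  have eps_c : 0 < eps / (c + 1) by rewrite !divr_gt0 ?subr_gt0.
  have /(cvgrPdist_lt _ _).1 /(_ _ eps_c) := cvg_series_cvg_0 cva.
  apply: filterS => k; rewrite sub0r normrN ger0_norm // => ak.
  apply: le_trans (_ : (c + 1) * a k <= _); first by rewrite ler_wpM2r ?lerDl.
  by rewrite -ler_pdivlMl // mulrC ltW.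
set D := \sum_(0 <= k < K) (c * a k) * r k.
exists (2 / (1 - rho) * (r 0 + D + b * T)) => m.
set s := \sum_(0 <= k < m) r k.
have rec_sum : \sum_(0 <= k < m) r k.+1 <=
    rho * s + \sum_(0 <= k < m) (c * a k) * r k + b * \sum_(0 <= k < m) a k.
  rewrite /s !mulr_sumr -!big_split /=; apply: ler_sum_nat => k _.
  by apply: le_trans (rec k) _; lra.
have := sum_weighted_le r0 (fun k => mulr_ge0 c0 (a0 k)) a_small m.
have : s <= r 0 + \sum_(0 <= k < m) r k.+1.
  by rewrite -big_nat_recl //; apply: ge0_sum_nat_le.
have : b * \sum_(0 <= k < m) a k <= b * T by rewrite ler_wpM2l.
rewrite -/D -/s /eps => bT s_le weighted.
have : (1 - rho) / 2 * s <= r 0 + D + b * T by lra.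
have -> : (1 - rho) / 2 * s = (2 / (1 - rho))^-1 * s.
  by rewrite invf_div.
by rewrite ler_pdivrMl // divr_gt0 // subr_gt0.
Qed.

End PerturbedContraction.

Lemma nneseries_fin_num_cvg0 {R : realType} (u : nat -> R) : (forall k, 0 <= u k) ->
  (\sum_(k <oo) (u k)%:E)%E \is a fin_num -> u @ \oo --> 0.
Proof.
move=> u0 fin_u; apply: cvg_series_cvg_0.
apply: nondecreasing_is_cvgn; first exact: nondecreasing_series.
exists (fine (\sum_(k <oo) (u k)%:E)%E) => _ [m _ <-].
rewrite -lee_fin fineK // /series /= -sumEFin.
exact: (@nneseries_lim_ge R (fun k => (u k)%:E) xpredT 0 m (fun k _ _ => u0 k)).
Qed.

Section IntegralBounds.
Context {R : realType} {d : measure_display} {T : measurableType d}.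
Variable mu : {measure set T -> \bar R}.
Local Open Scope ereal_scope.

Lemma ge0_integral_lincomb (F G : T -> R) (a b : R) :
  measurable_fun setT F -> measurable_fun setT G ->
  (forall w, (0 <= F w)%R) -> (forall w, (0 <= G w)%R) -> (0 <= a)%R -> (0 <= b)%R ->
  \int[mu]_w ((a * F w + b * G w)%R%:E) =
  a%:E * \int[mu]_w (F w)%:E + b%:E * \int[mu]_w (G w)%:E.
Proof.
move=> mF mG F0 G0 a0 b0.
have mZ (c : R) (H : T -> R) : measurable_fun setT H ->
    measurable_fun setT (fun w => c%:E * (H w)%:E).
  by move=> mH; apply/measurable_EFinP/measurable_funM => //; exact: measurable_cst.
under eq_integral do rewrite EFinD !EFinM.
rewrite ge0_integralD //; last 4 first.
- by move=> w _; rewrite -EFinM lee_fin mulr_ge0.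
- exact: mZ.
- by move=> w _; rewrite -EFinM lee_fin mulr_ge0.
- exact: mZ.
rewrite !ge0_integralZl_EFin //.
- by move=> w _; rewrite lee_fin.
- exact/measurable_EFinP.
- by move=> w _; rewrite lee_fin.
- exact/measurable_EFinP.
Qed.

Lemma integrable_ae_le_integral (Y B : T -> R) :
  mu.-integrable setT (EFin \o Y) -> measurable_fun setT B ->
  (forall w, (0 <= B w)%R) -> {ae mu, forall w, (Y w <= B w)%R} ->
  \int[mu]_w (Y w)%:E <= \int[mu]_w (B w)%:E.
Proof.
move=> iY mB B0 aeY; rewrite integralE.
apply: (@le_trans _ _ (\int[mu]_(w in setT) (EFin \o Y)^\+ w)).
  rewrite leeBlDr; last exact: integrable_neg_fin_num.
  by apply: leeDl; apply: integral_ge0 => w _; exact: funeneg_ge0.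
apply: ae_ge0_le_integral => //.
- by apply: measurable_funepos; exact: (measurable_int _ iY).
- by move=> w ?; rewrite lee_fin.
- exact/measurable_EFinP.
apply: filterS aeY => w hw _.
by rewrite funeposE ge_max /= !lee_fin hw B0.
Qed.

Lemma summable_integrals_cvg0_ae (U : nat -> T -> R) :
  (forall k, measurable_fun setT (U k)) -> (forall k w, (0 <= U k w)%R) ->
  \sum_(k <oo) \int[mu]_w (U k w)%:E < +oo ->
  {ae mu, forall w, U ^~ w @ \oo --> 0%R}.
Proof.
move=> mU U0 sum_fin.
have mEU k : measurable_fun setT (fun w => (U k w)%:E) by exact/measurable_EFinP.
have mS : measurable_fun setT (fun w => \sum_(k <oo) (U k w)%:E).
  exact: (@ge0_emeasurable_sum _ _ _ setT (fun k w => (U k w)%:E) predT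
    (fun k w _ _ => U0 k w) (fun k _ => mEU k)).
have intS : mu.-integrable setT (fun w => \sum_(k <oo) (U k w)%:E).
  apply/integrableP; split => //.
  rewrite (eq_integral (fun w => \sum_(k <oo) (U k w)%:E)); last first.
    by move=> w _; rewrite gee0_abs // nneseries_ge0 // => k _ _; rewrite lee_fin.
  by rewrite integral_nneseries // => k w _; rewrite lee_fin.
apply: filterS (integrable_ae measurableT intS) => w fin_w.
exact: nneseries_fin_num_cvg0 (fin_w I).
Qed.

End IntegralBounds.

Fixpoint lin_rec {R : realType} (u0 rho C : R) (z : nat -> R) (k : nat) : R :=
  if k is k'.+1 then rho * lin_rec u0 rho C z k' + C * z k' else u0.

Lemma lin_rec_ge {R : realType} {u0 rho C : R} {z v : nat -> R} : 0 <= rho ->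
  v 0 <= u0 -> (forall k, v k.+1 <= rho * v k + C * z k) ->
  forall k, v k <= lin_rec u0 rho C z k.
Proof.
move=> rho0 v0 v_rec; elim=> [//|k IH] /=.
by apply: le_trans (v_rec k) _; rewrite lerD2r ler_wpM2l.
Qed.

Lemma lin_rec_ge0 {R : realType} (u0 rho C : R) (z : nat -> R) :
  0 <= u0 -> 0 <= rho -> 0 <= C -> (forall k, 0 <= z k) ->
  forall k, 0 <= lin_rec u0 rho C z k.
Proof.
by move=> u00 rho0 C0 z0; elim=> [|k IH] //=; rewrite addr_ge0 // mulr_ge0.
Qed.

Lemma measurable_lin_rec {d} {T : measurableType d} {R : realType} (u0 rho C : R)
    (Z : nat -> T -> R) : (forall k, measurable_fun setT (Z k)) ->
  forall k, measurable_fun setT (fun w => lin_rec u0 rho C (Z ^~ w) k).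
Proof.
move=> mZ; elim=> [|k IH] /=; first exact: measurable_cst.
by apply: measurable_funD; apply: measurable_funM => //; exact: measurable_cst.
Qed.

Section PerturbedContractionAlmostSure.
Context {R : realType} {d : measure_display} {Omega : measurableType d}.
Variable P : probability Omega R.
Context {u0 rho0 C c1 c2 : R} {a : nat -> R} {Z V : nat -> Omega -> R}.
Context {G : nat -> set (set Omega)}.
Hypotheses (u00 : 0 <= u0) (rho0_lt1 : rho0 < 1) (C0 : 0 <= C)
  (c10 : 0 <= c1) (c20 : 0 <= c2) (a0 : forall k, 0 <= a k)
  (cva : cvgn (series a)).
Hypotheses (Z0 : forall k w, 0 <= Z k w) (V0 : forall k w, 0 <= V k w).
Hypothesis V_rec : {ae P, forall w,
  V 0 w <= u0 /\ forall k, V k.+1 w <= rho0 * V k w + C * Z k w}.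
Hypotheses (GT : forall k, G k setT) (noise : forall k, exists Y : Omega -> R,
  cond_exp_version P (G k) (Z k) Y /\ {ae P, forall w, Y w <= a k * (c1 * V k w + c2)}).

(* Since V >= 0, the recursion also holds with the nonnegative rate [rho], which
   makes the comparison with [lin_rec] monotone. *)
Let rho := Num.max rho0 0.
Let rho01 : 0 <= rho < 1.
Proof. by rewrite le_max lexx orbT gt_max rho0_lt1 ltr01. Qed.
Let rho_ge0 : 0 <= rho. Proof. by case/andP: rho01. Qed.

Let mZ k : measurable_fun setT (Z k).
Proof.
have [Y [[iZ _ _ _] _]] := noise k; exact/measurable_EFinP/(measurable_int _ iZ).
Qed.

(* [V] need not be measurable, but this majorant is *)
Let U k w := lin_rec u0 rho C (Z ^~ w) k.

Let U0 k w : 0 <= U k w.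
Proof. exact: lin_rec_ge0. Qed.

Let mU k : measurable_fun setT (U k).
Proof. exact: measurable_lin_rec. Qed.

Let V_le_U : {ae P, forall w k, V k w <= U k w}.
Proof.
apply: filterS V_rec => w [V0_le V_le]; apply: (lin_rec_ge rho_ge0 V0_le) => k.
by apply: le_trans (V_le k) _; rewrite lerD2r ler_wpM2r // le_max lexx.
Qed.

Let EU k := (\int[P]_w (U k w)%:E)%E.

Let EZ_le k : (\int[P]_w (Z k w)%:E <= (a k * c1)%:E * EU k + (a k * c2)%:E)%E.
Proof.
have [Y [[_ iY _ XY] Y_le]] := noise k; rewrite (XY _ (GT k)).
have m1 : measurable_fun setT (fun _ : Omega => 1 : R) by exact: measurable_cst.
have -> : ((a k * c1)%:E * EU k + (a k * c2)%:E =
    \int[P]_w (a k * c1 * U k w + a k * c2 * 1)%:E)%E.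
  rewrite ge0_integral_lincomb ?mulr_ge0 // (_ : \int[P]_w 1%:E = 1 * P setT)%E.
    by rewrite probability_setT !mule1.
  exact: integral_cst.
apply: integrable_ae_le_integral => //.
- by apply: measurable_funD; apply: measurable_funM => //; exact: measurable_cst.
- by move=> w; rewrite mulr1 addr_ge0 ?mulr_ge0.
apply: filterS2 V_le_U Y_le => w VU /le_trans; apply.
rewrite mulr1 (_ : _ * U k w + _ = a k * (c1 * U k w + c2)); last by ring.
by apply: ler_wpM2l => //; rewrite lerD2r; apply: ler_wpM2l.
Qed.

Let EU_rec k : EU k.+1 = (rho%:E * EU k + C%:E * \int[P]_w (Z k w)%:E)%E.
Proof. exact: (ge0_integral_lincomb P (U k) (Z k) rho C). Qed.

Let EZ_fin k : EU k \is a fin_num -> (\int[P]_w (Z k w)%:E)%E \is a fin_num.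
Proof.
move=> EU_k; rewrite ge0_fin_numE ?integral_ge0 // => [|w _]; last by rewrite lee_fin.
by apply: le_lt_trans (EZ_le k) _; rewrite ltey_eq fin_numD fin_numM.
Qed.

Let EU_fin k : EU k \is a fin_num.
Proof.
elim: k => [|k IH]; last by rewrite EU_rec fin_numD !fin_numM // EZ_fin.
rewrite /EU /= (_ : \int[P]_w u0%:E = u0%:E * P setT)%E; last exact: integral_cst.
by rewrite probability_setT mule1.
Qed.

Let EU_sum_bounded : exists B, forall m, \sum_(0 <= k < m) fine (EU k) <= B.
Proof.
apply: (perturbed_contraction_sum_bounded (fun k => fine (EU k)) a rho (C * c1)
  (C * c2)) => // [k|||k].
- by rewrite fine_ge0 // integral_ge0 // => w _; rewrite lee_fin.
- exact: mulr_ge0.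
- exact: mulr_ge0.
have EZ_le_fine :
    fine (\int[P]_w (Z k w)%:E)%E <= a k * c1 * fine (EU k) + a k * c2.
  by rewrite -lee_fin EFinD EFinM !fineK ?EZ_fin ?EU_fin // EZ_le.
rewrite EU_rec fineD ?fin_numM ?EZ_fin ?EU_fin // !fineM ?EZ_fin ?EU_fin //= lerD2l.
by have := ler_wpM2l C0 EZ_le_fine; lra.
Qed.

Let U_cvg0 : {ae P, forall w, U ^~ w @ \oo --> 0}.
Proof.
apply: (summable_integrals_cvg0_ae P U mU U0).
have [B sumB] := EU_sum_bounded.
apply: le_lt_trans (ltry B); apply: lime_le.
  by apply: is_cvg_nneseries => k _; rewrite integral_ge0 // => w _; rewrite lee_fin.
near=> m; rewrite (eq_bigr (fun k => (fine (EU k))%:E)) => [|k _]; last first.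
  by rewrite fineK.
by rewrite sumEFin lee_fin sumB.
Unshelve. all: by end_near.
Qed.

Lemma perturbed_contraction_cvg0_ae : {ae P, forall w, V ^~ w @ \oo --> 0}.
Proof.
apply: filterS2 V_le_U U_cvg0 => w VU U_w.
apply: (@squeeze_cvgr _ _ _ _ (cst 0) (U ^~ w)) => //; last exact: cvg_cst.
by near=> k; rewrite V0 VU.
Unshelve. all: by end_near.
Qed.

End PerturbedContractionAlmostSure.

Lemma iterate_filtration_setT {d} {T : measurableType d} {R : realType} {n : nat}
  (x : nat -> T -> 'cV[R]_n) k : iterate_filtration x k setT.
Proof. by rewrite -setC0; apply: sigma_algebraC; exact: sigma_algebra0. Qed.

Theorem mainTheorem3
  (R : realType) (n : nat) (d : measure_display) (Omega : measurableType d)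
  (P : probability Omega R) (Xi : Type)
  (F : 'cV[R]_n -> Xi -> R) (gradF : 'cV[R]_n -> Xi -> 'cV[R]_n)
  (xi : Omega -> Xi) (samples : nat -> nat -> Omega -> Xi)
  (f : 'cV[R]_n -> R) (gradf : 'cV[R]_n -> 'cV[R]_n) (xstar : 'cV[R]_n)
  (tau L nu1 nu2 lam_lo lam_hi : R)
  (H : nat -> Omega -> 'M[R]_n) (N : nat -> nat)
  (x0 : 'cV[R]_n) (x : nat -> Omega -> 'cV[R]_n) :
  (* f(x) = E[F(x, xi)] *)
  (forall y, P.-integrable setT (fun w => (F y (xi w))%:E) /\
             (\int[P]_w (F y (xi w))%:E = (f y)%:E)%E) ->
  0 < tau -> strongly_convex tau f ->
  (forall y, f xstar <= f y) ->
  (* F(., omega) convex and C^1 for every omega *)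
  (forall s : Xi, convex_fun (F ^~ s) /\ C1_with_gradient (F ^~ s) (gradF ^~ s)) ->
  (* f is C^1 with L-Lipschitz gradient *)
  0 < L -> C1_with_gradient f gradf ->
  (forall y z, enorm (gradf y - gradf z) <= L * enorm (y - z)) ->
  (* sample sizes *)
  (forall k, (0 < N k)%N) -> {homo N : i j / (i <= j)%N} ->
  cvg (series (fun k => ((N k)%:R : R)^-1) @ \oo) ->
  (* spectral bounds on H_k *)
  0 < lam_lo -> lam_lo <= lam_hi ->
  (N 0)%:R > 2 * nu1 ^+ 2 * lam_hi / (tau ^+ 2 * lam_lo) ->
  (* the iterates are random vectors, x_0 is given, and the recursion holds *)
  (forall k (i : 'I_n), measurable_fun setT (fun w => x k w i 0)) ->
  (forall w, x 0 w = x0) ->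
  (forall k w, x k.+1 w =
     x k w - (L * lam_hi)^-1 *:
       (H k w *m ((N k)%:R^-1 *: \sum_(j < N k) gradF (x k w) (samples k j w)))) ->
  (* H_k is F_k-measurable, symmetric, lam_lo I <= H_k <= lam_hi I a.s. *)
  (forall k (i j : 'I_n), measurable_wrt (iterate_filtration x k) (fun w => H k w i j)) ->
  (forall k, {ae P, forall w, (H k w)^T = H k w /\
       forall v : 'cV[R]_n, lam_lo * dotv v v <= dotv v (H k w *m v) <= lam_hi * dotv v v}) ->
  (* noise assumptions *)
  0 < nu1 -> 0 < nu2 ->
  (forall k, let wbar := fun w => gradf (x k w) -
        (N k)%:R^-1 *: \sum_(j < N k) gradF (x k w) (samples k j w) in
     (exists Y, cond_exp_version P (iterate_filtration x k)
                  (fun w => enorm (wbar w) ^+ 2) Y /\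
        {ae P, forall w, Y w <= (nu1 ^+ 2 * enorm (x k w) ^+ 2 + nu2 ^+ 2) / (N k)%:R}) /\
     (forall i : 'I_n, exists Y, cond_exp_version P (iterate_filtration x k)
                  (fun w => wbar w i 0) Y /\ {ae P, forall w, Y w = 0})) ->
  {ae P, forall w, (fun k => f (x k w)) @ \oo --> f xstar}.
Proof.
move=> _ tau0 sc fmin _ L0 [gr _] lip _ _ cvN lo0 lohi _ _ x_0 x_rec _ H_ae _ _ noise.
set wbar := fun k w => gradf (x k w) -
  (N k)%:R^-1 *: \sum_(j < N k) gradF (x k w) (samples k j w).
set V := fun k w => f (x k w) - f xstar.
suff V_cvg0 : {ae P, forall w, V ^~ w @ \oo --> 0}.
  by apply: filterS V_cvg0 => w /subr_cvg0.
apply: (perturbed_contraction_cvg0_ae P (u0 := f x0 - f xstar)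
  (rho0 := 1 - lam_lo * tau / (4 * L * lam_hi)) (C := 9 / (2 * L))
  (c1 := 8 * nu1 ^+ 2 / tau) (c2 := 2 * nu1 ^+ 2 * enorm xstar ^+ 2 + nu2 ^+ 2)
  (a := fun k => (N k)%:R^-1) (Z := fun k w => enorm (wbar k w) ^+ 2)
  (G := iterate_filtration x)) => //.
- by rewrite subr_ge0.
- by rewrite ltrBlDr ltrDl !divr_gt0 ?mulr_gt0 // (lt_le_trans lo0 lohi).
- by rewrite divr_ge0 // mulr_ge0 // ltW.
- by rewrite divr_ge0 ?(ltW tau0) // mulr_ge0 ?ler0n ?sqr_ge0.
- by rewrite addr_ge0 ?sqr_ge0 // mulr_ge0 ?sqr_ge0 // mulr_ge0 ?sqr_ge0.
- by move=> k w; rewrite sqr_ge0.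
- by move=> k w; rewrite /V subr_ge0.
- apply: filterS (ae_foralln H_ae) => w Hw; split => [|k]; first by rewrite /V x_0.
  have [symH boundsH] := Hw k.
  rewrite /V x_rec -[_ *: \sum_(j < _) _](subKr (gradf (x k w))).
  exact: (preconditioned_step_gap_le L0 lo0 lohi tau0 gr lip sc _ _ _ symH boundsH).
- exact: iterate_filtration_setT.
move=> k; have [[Y [cY Y_le]] _] := noise k; exists Y; split => //.
apply: filterS Y_le => w /le_trans; apply; rewrite mulrC ler_wpM2l ?invr_ge0 //.
exact: (affine_enorm_sqr_le_gap tau0 sc fmin nu1 nu2 (lexx (V k w))).
Qed.
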